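(* Let $H_1,\dots,H_n$ be null hypotheses indexed by $\mathcal V=\{1,\dots,n\}$, and for each $v\in\mathcal V$ let $p_v$ be an observed random variable. Let $\bar{\mathcal S}=\{v: H_v \text{ is true}\}$ and $\mathcal S=\mathcal V\setminus\bar{\mathcal S}$. Let $\mathcal G=(\mathcal V,\mathcal E)$ be a directed acyclic graph such that whenever $H_v$ is false and $w$ is an ancestor of $v$ in $\mathcal G$, $H_w$ is also false (equivalently, if $v\in\bar{\mathcal S}$ then every descendant of $v$ is in $\bar{\mathcal S}$). For each $v$, let $\mathcal C_v$ be the set consisting of $v$ and all its descendants in $\mathcal G$, let $f_v:\mathbb R^{|\mathcal V|}\to\mathbb R$ be an arbitrary (measurable) function, and define \[F_v(c;x_{\mathcal V\setminus\mathcal C_v})=\Pr\big(f_v(u_{\mathcal C_v},x_{\mathcal V\setminus\mathcal C_v})\le c\big),\qquad \tilde p_v=F_v\big(f_v(p_{\mathcal C_v},p_{\mathcal V\setminus\mathcal C_v});p_{\mathcal V\setminus\mathcal C_v}\big),\] where $u_{\mathcal C_v}=\{u_w\}_{w\in\mathcal C_v}$ are i.i.d. $\mathrm{Uniform}[0,1]$. Assume that the null $p$-values $\{p_v\}_{v\in\bar{\mathcal S}}$ are mutually independent and independent of the nonnull $p$-values $\{p_v\}_{v\in\mathcal S}$. (a) If the null $p$-values are i.i.d. $\mathrm{Uniform}[0,1]$, then $\tilde p_v$ is super-uniform for every $v\in\bar{\mathcal S}$. (b) If the null $p$-values are super-uniform and, for every value of $p_{\mathcal V\setminus\mathcal C_v}$,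 $f_v$ is nondecreasing in $p_{\mathcal C_v}$ (entrywise), then $\tilde p_v$ is super-uniform for every $v\in\bar{\mathcal S}$.
   Context: A random variable $X$ is super-uniform if $\Pr(X\le c)\le c$ for all $c\in[0,1]$. *)

From HB Require Import structures.
From mathcomp Require Import all_boot all_order all_algebra.
From mathcomp Require Import all_classical all_reals all_analysis.
Set Implicit Arguments. Unset Strict Implicit. Unset Printing Implicit Defensive.
Import Order.TTheory GRing.Theory Num.Theory.
Local Open Scope classical_set_scope.
Local Open Scope ring_scope.

Section Defs.
Context {R : realType} {d : measure_display} {T : measurableType d}.

Definition super_uniform (P : probability T R) (X : T -> R) : Prop :=
  forall c : R, 0 <= c <= 1 -> (P [set t | (X t <= c)%R] <= c%:E)%E.

Definition uniform01 (P : probability T R) (X : T -> R) : Prop :=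
  forall A : set R, measurable A ->
    P (X @^-1` A) = uniform_prob (@ltr01 R) A.

Definition mutually_independent (n : nat) (P : probability T R)
    (X : 'I_n -> T -> R) : Prop :=
  forall (J : {set 'I_n}) (B : 'I_n -> set R),
    (forall i, measurable (B i)) ->
    P (\bigcap_(i in [set i | i \in J]) (X i @^-1` B i)) =
    (\prod_(i in J) P (X i @^-1` B i))%E.

Definition sigma_of (n : nat) (X : 'I_n -> T -> R) (J : {set 'I_n}) :
    set (set T) :=
  <<s [set E | exists i B, i \in J /\ measurable B /\ E = X i @^-1` B] >>.

Definition nulls_independent (n : nat) (P : probability T R)
    (X : 'I_n -> T -> R) (S0 : {set 'I_n}) : Prop :=
  forall (B : 'I_n -> set R) (E : set T),
    (forall v, measurable (B v)) -> sigma_of X (~: S0) E ->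
    P (E `&` \bigcap_(v in [set v | v \in S0]) (X v @^-1` B v)) =
    (P E * \prod_(v in S0) P (X v @^-1` B v))%E.

End Defs.

Definition acyclic (n : nat) (e : rel 'I_n) : Prop :=
  forall v w, e v w -> ~~ connect e w v.

Definition desc_set (n : nat) (e : rel 'I_n) (v : 'I_n) : {set 'I_n} :=
  [set w | connect e v w].

Definition splice (R : Type) (n : nat) (C : {set 'I_n}) (u x : 'I_n -> R) :
    n.-tuple R :=
  [tuple (if i \in C then u i else x i) | i < n].

Definition Fcdf {R : realType} {d' : measure_display} {T' : measurableType d'}
    (Q : probability T' R) (n : nat) (u : 'I_n -> T' -> R) (C : {set 'I_n})
    (f : n.-tuple R -> R) (c : R) (x : 'I_n -> R) : R :=
  fine (Q [set s | f (splice C (fun w => u w s) x) <= c]).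

Definition ptilde {R : realType} {d' : measure_display} {T' : measurableType d'}
    {d : measure_display} {T : measurableType d}
    (Q : probability T' R) (n : nat) (u : 'I_n -> T' -> R) (C : {set 'I_n})
    (f : n.-tuple R -> R) (p : 'I_n -> T -> R) (t : T) : R :=
  Fcdf Q u C f (f (splice C (fun w => p w t) (fun w => p w t)))
       (fun w => p w t).

From HB Require Import structures.
From mathcomp Require Import all_boot all_order all_algebra.
From mathcomp Require Import all_classical all_reals all_analysis.
Import Order.TTheory GRing.Theory Num.Theory.
Local Open Scope classical_set_scope.
Local Open Scope ring_scope.
Set Implicit Arguments. Unset Strict Implicit. Unset Printing Implicit Defensive.

(* Fix v in Sbar and let C be the set of its descendants, all of them nulls.
   Since p_C is independent of the other p-values, p has the same law on P x Q
   as the vector in which p_C is replaced by g(u_C), with g the identity in (a)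
   and the quantile transform of the laws of the p_w in (b).  For a fixed value
   x of the other coordinates, the statistic becomes F(W), where F is the cdf of
   Z = f_v(u_C, x) and W = f_v(g(u_C), x) >= Z (in (b) because g(u) >= u for a
   super-uniform law and f_v is monotone).  Now Pr(F(W) <= c) <= c whenever
   W >= Z, and integrating over x gives the claim. *)

(** * Half-lines and boxes *)

Section lrays.
Context {R : realType}.

(* The whole line is included so that boxes may leave coordinates free. *)
Definition lrays : set (set R) :=
  [set A | A = setT \/ exists a, A = [set x | x <= a]].

Lemma measurable_lray (a : R) : measurable [set x : R | x <= a].
Proof.
rewrite (_ : [set x | x <= a] = `]-oo, a]%classic); first exact: measurable_itv.
by apply/seteqP; split => x; rewrite /= in_itv.
Qed.

Lemma lrays_measurable A : lrays A -> measurable A.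
Proof. by case=> [->|[a ->]]; [exact: measurableT|exact: measurable_lray]. Qed.

Lemma measurable_lrays : @measurable _ R = <<s lrays >>.
Proof.
apply/seteqP; split; last first.
  by apply: smallest_sub; [exact: sigma_algebra_measurable|exact: lrays_measurable].
have -> : @measurable _ R = <<s @measurable_realfun.RGenOInfty.G R >>.
  exact: measurable_realfun.RGenOInfty.measurableE.
apply: smallest_sub; first exact: smallest_sigma_algebra.
move=> _ [a ->]; rewrite (_ : `]a, +oo[%classic = setT `\` [set x | x <= a]).
  by apply: sigma_algebraCD; apply: sub_sigma_algebra; right; exists a.
by apply/seteqP; split => x; rewrite /= in_itv /= andbT ltNge; [move/negP|case=> _ /negP].
Qed.

Lemma lrays_setI_closed : setI_closed lrays.
Proof.
move=> A B [->|[a ->]] [->|[b ->]]; rewrite ?setTI ?setIT;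
  [by left|by right; exists b|by right; exists a|].
right; exists (Order.min a b).
by apply/seteqP; split => x /=; rewrite le_min; [case=> -> ->|move/andP].
Qed.

Section boxes.
Variable n : nat.

Definition box (B : 'I_n -> set R) : set (n.-tuple R) :=
  [set z | forall i, B i (tnth z i)].

Definition lray_boxes : set (set (n.-tuple R)) :=
  box @` [set B | forall i, lrays (B i)].

Lemma measurable_box B : (forall i, measurable (B i)) -> measurable (box B).
Proof.
move=> mB; rewrite (_ : box B = \bigcap_(i in [set: 'I_n]) ((@tnth n R)^~ i @^-1` B i)).
  apply: fin_bigcap_measurable; first exact: finite_finset.
  by move=> i _; rewrite -[X in measurable X]setTI; exact: measurable_tnth.
by apply/seteqP; split => z /= zB i; [move=> _|]; exact: zB.
Qed.

Lemma lray_boxes_setI_closed : setI_closed lray_boxes.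
Proof.
move=> _ _ [B lB <-] [B' lB' <-].
exists (fun i => B i `&` B' i); first by move=> i; exact: lrays_setI_closed.
by apply/seteqP; split => z /= => [zB|[zB zB'] i]; [split => i; case: (zB i)|].
Qed.

Lemma lray_boxesT : lray_boxes setT.
Proof. by exists (fun=> setT) => [i|]; [left|apply/seteqP; split]. Qed.

Lemma measurable_lray_boxes : @measurable _ (n.-tuple R) = <<s lray_boxes >>.
Proof.
apply/seteqP; split; last first.
  apply: smallest_sub; first exact: sigma_algebra_measurable.
  by move=> _ [B lB <-]; apply: measurable_box => i; exact: lrays_measurable.
apply: smallest_sub; first exact: smallest_sigma_algebra.
apply: (big_ind (fun S => S `<=` <<s lray_boxes >>)) => //.
  by move=> S1 S2 S1B S2B A [/S1B|/S2B].
move=> i _ _ [Y mY <-].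
suff : <<s setT, preimage_set_system setT ((@tnth n R)^~ i) lrays >> `<=`
       <<s lray_boxes >>.
  apply; rewrite (@g_sigma_preimageE _ ((R : measurableType _) : pointedType)).
  by exists Y => //; move: mY; rewrite measurable_lrays.
apply: smallest_sub; first exact: smallest_sigma_algebra.
move=> _ [A lA <-]; apply: sub_sigma_algebra.
exists (fun j => if j == i then A else setT).
  by move=> j; case: eqP => // _; left.
apply/seteqP; split => z /=; first by move/(_ i); rewrite eqxx.
by move=> [_ zA] j; case: eqP => // ->.
Qed.

Lemma eq_measure_lray_boxes (m1 m2 : {measure set (n.-tuple R) -> \bar R}) :
  (m1 setT < +oo)%E ->
  (forall B, (forall i, lrays (B i)) -> m1 (box B) = m2 (box B)) ->
  forall A, measurable A -> m1 A = m2 A.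
Proof.
move=> m1T m12; apply: (measure_unique lray_boxes (fun=> setT)) => //.
- exact: measurable_lray_boxes.
- exact: lray_boxes_setI_closed.
- by move=> _; exact: lray_boxesT.
- by apply/seteqP; split => // z _; exists 0%N.
- by move=> _ [B lB <-]; exact: m12.
Qed.

End boxes.
End lrays.

(** * Distribution functions *)

Lemma downset_cofinal_seq {R : realType} (I : set R) : I !=set0 ->
  (forall a b, I b -> a <= b -> I a) ->
  exists a : nat -> R, [/\ nondecreasing_seq a, forall k, I (a k) &
    forall x, I x -> exists k, x <= a k].
Proof.
move=> [a0 Ia0] Idown.
have [ubI|/forallNP nubI] := pselect (has_ubound I); last first.
  exists (fun k => k%:R); split => [k l kl|k|x _]; first by rewrite ler_nat.
    have /existsNP[x /not_implyP[Ix /negP]] := nubI k%:R.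
    by rewrite -ltNge => /ltW; exact: Idown.
  by exists (Num.truncn x).+1; exact/ltW/truncnS_gt.
have supI : has_sup I by split => //; exists a0.
have [Isup|nIsup] := pselect (I (sup I)).
  by exists (fun=> sup I); split => // x Ix; exists 0%N; exact: sup_upper_bound.
exists (fun k => sup I - k.+1%:R^-1); split.
- move=> k l kl; rewrite lerD2l lerN2 lef_pV2 ?posrE ?ltr0Sn //.
  by rewrite ler_nat ltnS.
- move=> k; have kp : 0 < k.+1%:R^-1 :> R by rewrite invr_gt0 ltr0Sn.
  have [x Ix /ltW] := sup_adherent kp supI.
  exact: Idown.
- move=> x Ix; have xs : x < sup I.
    rewrite lt_neqAle sup_upper_bound // andbT.
    by apply: contra_notN nIsup => /eqP <-.
  exists (Num.truncn ((sup I - x)^-1)).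
  rewrite lerBrDr addrC -lerBrDr -[sup I - x]invrK.
  rewrite lef_pV2 ?posrE ?invr_gt0 ?subr_gt0 ?ltr0Sn // invrK.
  exact/ltW/truncnS_gt.
Qed.

Definition cdfR {R : realType} {d} {T : measurableType d} (P : probability T R)
    (X : T -> R) (a : R) : R :=
  fine (P [set t | X t <= a]).

Section cdfR.
Context {R : realType} {d} {T : measurableType d} (P : probability T R).
Variables (X : T -> R) (mX : measurable_fun setT X).

Lemma measurable_sublevel (a : R) : measurable [set t | X t <= a].
Proof. by rewrite -[X in measurable X]setTI; exact: mX (measurable_lray a). Qed.

Lemma cdfRE a : (cdfR P X a)%:E = P [set t | X t <= a].
Proof. by rewrite fineK // fin_num_measure //; exact: measurable_sublevel. Qed.

Lemma cdfR_ge0 a : 0 <= cdfR P X a.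
Proof. by rewrite -lee_fin cdfRE. Qed.

Lemma cdfR_le1 a : cdfR P X a <= 1.
Proof. by rewrite -lee_fin cdfRE; exact/probability_le1/measurable_sublevel. Qed.

Lemma cdfR_nondecreasing : {homo cdfR P X : a b / a <= b}.
Proof.
move=> a b ab; rewrite -lee_fin !cdfRE.
apply: le_measure; rewrite ?inE; try exact: measurable_sublevel.
by move=> t /= /le_trans; apply.
Qed.

Lemma cdfR_ge_right a c : (forall k, c <= cdfR P X (a + k.+1%:R^-1)) ->
  c <= cdfR P X a.
Proof.
move=> c_le; pose G k := [set t | X t <= a + k.+1%:R^-1].
have mG k : measurable (G k) by exact: measurable_sublevel.
have Gdecr : nonincreasing_seq G.
  move=> k l kl; apply/subsetPset => t /= /le_trans; apply.
  by rewrite lerD2l lef_pV2 ?posrE ?ltr0Sn // ler_nat ltnS.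
have capG : \bigcap_k G k = [set t | X t <= a].
  apply/seteqP; split => t /= Gt; last first.
    by move=> k _; rewrite /G /= (le_trans Gt) // lerDl invr_ge0.
  rewrite leNgt; apply/negP => aXt.
  have := Gt (Num.truncn ((X t - a)^-1)) I; rewrite /G /= -lerBlDl.
  rewrite -[X t - a]invrK lef_pV2 ?posrE ?invr_gt0 ?subr_gt0 ?ltr0Sn // invrK.
  by apply/negP; rewrite -ltNge; exact: truncnS_gt.
have G0 : (P (G 0%N) < +oo)%E.
  exact: le_lt_trans (probability_le1 _ (mG 0%N)) (ltry _).
have cvG := nonincreasing_cvg_mu G0 mG (bigcapT_measurable mG) Gdecr.
rewrite -lee_fin cdfRE -capG -(cvg_lim _ cvG) //.
apply: lime_ge; first by apply/cvg_ex; eexists; exact: cvG.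
by near=> k => /=; rewrite -cdfRE lee_fin.
Unshelve. all: by end_near.
Qed.

Lemma prob_bigcup_sublevel_le (a : nat -> R) (c : R) : nondecreasing_seq a ->
  (forall k, cdfR P X (a k) <= c) ->
  (P (\bigcup_k [set t | (X t <= a k)%R]) <= c%:E)%E.
Proof.
move=> a_nd Fa_le; pose F k := [set t | X t <= a k].
have mF k : measurable (F k) by exact: measurable_sublevel.
have F_nd : nondecreasing_seq F.
  by move=> k l kl; apply/subsetPset => t /= /le_trans; apply; exact: a_nd.
have cvF := nondecreasing_cvg_mu (mu := P) mF (bigcupT_measurable _ mF) F_nd.
rewrite -(cvg_lim _ cvF) //.
apply: lime_le; first by apply/cvg_ex; eexists; exact: cvF.
by near=> k => /=; rewrite -cdfRE lee_fin.
Unshelve. all: by end_near.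
Qed.

Lemma exists_cdfR_gt c : c < 1 -> exists a, c < cdfR P X a.
Proof.
move=> c1; apply: contrapT => /forallNP cdfR_le.
suff : (P setT <= c%:E)%E by rewrite probability_setT lee_fin leNgt c1.
have -> : setT = \bigcup_k [set t | (X t <= k%:R)%R].
  apply/seteqP; split => // t _; exists (Num.truncn (X t)).+1 => //=.
  exact/ltW/truncnS_gt.
apply: prob_bigcup_sublevel_le => [k l kl|k]; first by rewrite ler_nat.
by rewrite leNgt; apply/negP => /cdfR_le.
Qed.

(* {F(Y) <= c} lies in the preimage under X of the down-set {F <= c}, an
   increasing union of sublevel sets of X, each of probability <= c. *)
Lemma cdfR_comp_super_uniform (Y : T -> R) : measurable_fun setT Y ->
  (forall t, X t <= Y t) -> super_uniform P (cdfR P X \o Y).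
Proof.
move=> mY XY c /andP[c0 _].
pose I := [set a | cdfR P X a <= c].
have Idown a b : I b -> a <= b -> I a.
  by move=> Ib ab; exact: le_trans (cdfR_nondecreasing ab) Ib.
have sub_I : [set t | (cdfR P X \o Y) t <= c] `<=` X @^-1` I.
  by move=> t /= /Idown; apply.
have [[a0 Ia0]|noI] := pselect (I !=set0); last first.
  rewrite (_ : [set t | _] = set0) ?measure0 ?lee_fin //.
  by apply/seteqP; split => // t /sub_I XtI; apply: noI; exists (X t).
have [a [a_nd Ia cofinal]] := downset_cofinal_seq (ex_intro _ a0 Ia0) Idown.
apply: le_trans (prob_bigcup_sublevel_le a_nd Ia).
apply: le_measure; rewrite ?inE.
- have mF := measurable_realfun.nondecreasing_measurable measurableT cdfR_nondecreasing.
  have mFY : measurable_fun setT (cdfR P X \o Y) by exact: measurableT_comp mF mY.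
  by rewrite -[X in measurable X]setTI; exact: (mFY measurableT _ (measurable_lray c)).
- by apply: bigcupT_measurable => k; exact: measurable_sublevel.
- by move=> t /sub_I /cofinal [k Xtk]; exists k.
Qed.

End cdfR.

(** * Quantile coupling *)

Lemma uniform01E {R : realType} (A : set R) : measurable A ->
  uniform_prob (@ltr01 R) A = lebesgue_measure (A `&` `[0, 1]%classic).
Proof.
move=> mA; rewrite /uniform_prob integral_uniform_pdf.
rewrite (eq_integral (fun=> 1%:E)); last first.
  move=> x; rewrite inE /= in_itv /= => -[_ x01].
  by rewrite /uniform_pdf x01 subr0 invr1.
by rewrite integral_cst ?mul1e //; exact: measurableI.
Qed.

Lemma lebesgue_measure_itv0 {R : realType} (b1 b2 : bool) (c : R) : 0 <= c ->
  lebesgue_measure [set` Interval (BSide b1 0) (BSide b2 c)] = c%:E.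
Proof.
move=> c0; rewrite lebesgue_measure_itv /= lte_fin oppr0 adde0.
by case: (ltgtP 0 c) c0 => // <-.
Qed.

(* Outside ]0, 1[ the quantile transform is the identity, so that
   u <= quantile P X u holds for every u when X is super-uniform. *)
Definition quantile {R : realType} {d} {T : measurableType d}
    (P : probability T R) (X : T -> R) (u : R) : R :=
  if 0 < u < 1 then inf [set a | u <= cdfR P X a] else u.

Section quantile.
Context {R : realType} {d} {T : measurableType d} (P : probability T R).
Variables (X : T -> R) (mX : measurable_fun setT X) (suX : super_uniform P X).

Local Notation F := (cdfR P X).

Lemma cdfR_le_id a : 0 <= a <= 1 -> F a <= a.
Proof. by move=> a01; rewrite -lee_fin cdfRE //; exact: suX. Qed.

Lemma cdfR_lt0 a : a < 0 -> F a = 0.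
Proof.
move=> a0; apply/le_anti; rewrite cdfR_ge0 // andbT.
by rewrite (le_trans (cdfR_nondecreasing P mX (ltW a0))) // cdfR_le_id // lexx ler01.
Qed.

Lemma quantile_le u a : 0 < u < 1 -> (quantile P X u <= a) = (u <= F a).
Proof.
move=> /[dup] u01 /andP[u0 u1]; rewrite /quantile u01.
have lbS : lbound [set a | u <= F a] 0.
  move=> b /= uFb; rewrite leNgt; apply/negP => /cdfR_lt0 Fb0.
  by move: uFb; rewrite Fb0 leNgt u0.
apply/idP/idP => [infS_a|uFa]; last by apply: ge_inf => //; exists 0.
apply: le_trans (cdfR_nondecreasing P mX infS_a); apply: cdfR_ge_right => // k.
have [b ub] := exists_cdfR_gt P mX u1.
have Sne : [set a | u <= F a] !=set0 by exists b; exact: ltW.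
have infS_lt : inf [set a | u <= F a] < inf [set a | u <= F a] + k.+1%:R^-1.
  by rewrite ltrDl invr_gt0 ltr0Sn.
have [c uFc /ltW/(cdfR_nondecreasing P mX)] := inf_lt Sne infS_lt.
exact: le_trans.
Qed.

Lemma quantile_ge u : u <= quantile P X u.
Proof.
have [u01|] := boolP (0 < u < 1); last by rewrite /quantile => /negbTE ->.
have /andP[u0 u1] := u01; rewrite leNgt; apply/negP => qu.
have := lexx (quantile P X u); rewrite quantile_le //; apply/negP; rewrite -ltNge.
have [q0|q0] := ltrP (quantile P X u) 0; first by rewrite cdfR_lt0.
by rewrite (le_lt_trans _ qu) // cdfR_le_id // q0 (le_trans (ltW qu) (ltW u1)).
Qed.

Lemma quantile_preimage a : quantile P X @^-1` [set x | x <= a] =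
  (`]0, 1[%classic `&` [set x | x <= F a]) `|`
  (~` `]0, 1[%classic `&` [set x | x <= a]).
Proof.
apply/seteqP; split => x /=; rewrite in_itv /=.
  case: (boolP (0 < x < 1)) => x01 xa; first by left; rewrite -quantile_le.
  by right; rewrite /quantile (negbTE x01) in xa.
by case=> -[x01 xa]; [rewrite quantile_le|rewrite /quantile ifN //; exact/negP].
Qed.

Lemma measurable_quantile : measurable_fun setT (quantile P X).
Proof.
apply: (measurability _ measurable_lrays) => _ [_ [->|[a ->]] <-].
  by rewrite preimage_setT setTI.
have m01 : measurable (`]0, 1[%classic : set R) by exact: measurable_itv.
rewrite setTI quantile_preimage.
by apply: measurableU; apply: measurableI; try exact: measurable_lray;
  [|exact: measurableC].
Qed.

Lemma uniform01_quantile {d'} {T' : measurableType d'} (Q : probability T' R)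
    (U : T' -> R) : uniform01 Q U ->
  forall a, Q [set s | quantile P X (U s) <= a] = P [set t | X t <= a].
Proof.
move=> unifU a; rewrite -(cdfRE P mX a).
have mA : measurable (quantile P X @^-1` [set x | x <= a]).
  rewrite -[X in measurable X]setTI.
  exact: measurable_quantile (measurable_lray a).
rewrite [LHS](unifU _ mA) uniform01E // quantile_preimage.
rewrite quantile_preimage in mA.
have Fa0 := cdfR_ge0 P mX a; have Fa1 := cdfR_le1 P mX a.
have m01 : measurable (`[0, 1]%classic : set R) by exact: measurable_itv.
apply/le_anti/andP; split.
- rewrite -[leRHS](lebesgue_measure_itv0 true false Fa0) -[leRHS]adde0.
  have m0F : measurable (`[0, F a]%classic : set R) by exact: measurable_itv.
  rewrite -(lebesgue_measure_set1 1).
  apply: (le_trans _ (measureU2 lebesgue_measure m0F (measurable_set1 (1 : R)))).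
  apply: le_measure; rewrite ?inE //; [exact: measurableI|exact: measurableU|].
  move=> x [] /=; rewrite !in_itv /=.
  move=> [[/andP[x0 _] xF]|[x01 _]] /andP[x0' x1'].
    by left; rewrite (ltW x0).
  have [->|x_ne1] := eqVneq x 1; [by right|left].
  suff -> : x = 0 by rewrite lexx.
  apply/le_anti; rewrite x0' andbT leNgt; apply: contra_notN x01 => x_gt0.
  by rewrite x_gt0 lt_neqAle x_ne1 x1'.
- rewrite -[leLHS](lebesgue_measure_itv0 false true Fa0).
  have m0F : measurable (`]0, F a[%classic : set R) by exact: measurable_itv.
  apply: le_measure; rewrite ?inE //; first exact: measurableI.
  move=> x /=; rewrite !in_itv /= => /andP[x0 xF].
  have x1 : x < 1 by exact: lt_le_trans xF Fa1.
  by split; [left; rewrite x0 x1 (ltW xF)|rewrite !ltW].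
Qed.

End quantile.

(** * Laws of random vectors *)

Lemma eq_law_lray_boxes {R : realType} {n : nat}
    {d1} {T1 : measurableType d1} {d2} {T2 : measurableType d2}
    (mu1 : {measure set T1 -> \bar R}) (mu2 : {measure set T2 -> \bar R})
    (Y1 : T1 -> n.-tuple R) (Y2 : T2 -> n.-tuple R) :
  measurable_fun setT Y1 -> measurable_fun setT Y2 -> (mu1 setT < +oo)%E ->
  (forall B, (forall i, lrays (B i)) ->
     mu1 (Y1 @^-1` box B) = mu2 (Y2 @^-1` box B)) ->
  forall A, measurable A -> mu1 (Y1 @^-1` A) = mu2 (Y2 @^-1` A).
Proof.
move=> mY1 mY2 mu1T eq_boxes.
pose law1 :=
  measure_function_pushforward__canonical__measure_function_Measure mu1 mY1.
pose law2 :=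
  measure_function_pushforward__canonical__measure_function_Measure mu2 mY2.
by apply: (eq_measure_lray_boxes (m1 := law1) (m2 := law2)) => //;
  rewrite /law1 /= /pushforward preimage_setT.
Qed.

Definition cylinder {T R : Type} {n : nat} (J : {set 'I_n})
    (X : 'I_n -> T -> R) (B : 'I_n -> set R) : set T :=
  [set t | forall i, i \in J -> B i (X i t)].

Section cylinder.
Context {T R : Type} {n : nat} (X : 'I_n -> T -> R) (B : 'I_n -> set R).

Lemma cylinderE (J : {set 'I_n}) :
  cylinder J X B = \bigcap_(i in [set i | i \in J]) (X i @^-1` B i).
Proof. by apply/seteqP; split => t /= XB i; exact: XB. Qed.

Lemma cylinderI (J K : {set 'I_n}) :
  cylinder J X B `&` cylinder K X B = cylinder (J :|: K) X B.
Proof.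
apply/seteqP; split => t /= => [[XJ XK] i|XJK].
  by rewrite inE => /orP[/XJ|/XK].
by split => i iJ; apply: XJK; rewrite inE iJ ?orbT.
Qed.

Lemma cylinder_restrict (J K : {set 'I_n}) :
  cylinder J X (fun i => if i \in K then setT else B i) = cylinder (J :\: K) X B.
Proof.
apply/seteqP; split => t /= XB i.
  by rewrite inE => /andP[/negbTE iK /XB]; rewrite iK.
by case: ifPn => // iK iJ; apply: XB; rewrite inE iK.
Qed.

End cylinder.

Lemma measurable_cylinder {R : realType} {d} {T : measurableType d} {n : nat}
    (J : {set 'I_n}) (X : 'I_n -> T -> R) (B : 'I_n -> set R) :
  (forall i, i \in J -> measurable_fun setT (X i)) ->
  (forall i, i \in J -> measurable (B i)) -> measurable (cylinder J X B).
Proof.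
move=> mX mB; rewrite cylinderE.
apply: fin_bigcap_measurable; first exact: finite_finset.
by move=> i iJ; rewrite -[X in measurable X]setTI; apply: mX => //; exact: mB.
Qed.

Lemma sigma_of_cylinder {R : realType} {d} {T : measurableType d} {n : nat}
    (J : {set 'I_n}) (X : 'I_n -> T -> R) (B : 'I_n -> set R) :
  (forall i, measurable (B i)) -> sigma_of X J (cylinder J X B).
Proof.
move=> mB; rewrite cylinderE.
apply: (@fin_bigcap_measurable _ (g_sigma_algebraType _)); first exact: finite_finset.
by move=> i iJ; apply: sub_sigma_algebra; exists i, (B i).
Qed.

Lemma nulls_independent_cylinder {R : realType} {d} {T : measurableType d}
    (P : probability T R) {n : nat} (X : 'I_n -> T -> R) (Sbar C : {set 'I_n})
    (B : 'I_n -> set R) :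
  C \subset Sbar -> nulls_independent P X Sbar -> (forall i, measurable (B i)) ->
  P (cylinder [set: 'I_n] X B) =
  (P (cylinder (~: C) X B) * \prod_(i in C) P (X i @^-1` B i))%E.
Proof.
move=> CS indep mB.
pose E := cylinder (~: Sbar) X B.
have sE : sigma_of X (~: Sbar) E by exact: sigma_of_cylinder.
pose BC i := if i \in C then setT else B i.
have mBC i : measurable (BC i) by rewrite /BC; case: ifP.
have := indep BC E mBC sE; rewrite -cylinderE cylinder_restrict cylinderI.
have -> : ~: Sbar :|: Sbar :\: C = ~: C.
  apply/setP => i; rewrite !inE.
  case: (boolP (i \in C)) => [iC|_]; last by rewrite orNb.
  by rewrite (fintype.subsetP CS i iC).
move=> ->; have := indep B E mB sE.
rewrite -cylinderE cylinderI finset.setUC finset.setUCr => ->.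
rewrite [(\prod_(v in Sbar) P (X v @^-1` B v))%E](bigID (fun i => i \in C)) /=.
rewrite [(\prod_(v in Sbar) P (X v @^-1` BC v))%E](bigID (fun i => i \in C)) /=.
have -> : (\prod_(i in Sbar | i \in C) P (X i @^-1` BC i))%E = 1%E.
  by apply: big1 => i /andP[_ iC]; rewrite /BC iC preimage_setT probability_setT.
have -> : (\prod_(i in Sbar | i \in C) P (X i @^-1` B i))%E =
          (\prod_(i in C) P (X i @^-1` B i))%E.
  apply: eq_bigl => i; case: (boolP (i \in C)) => iC; rewrite ?andbT ?andbF //.
  exact: (fintype.subsetP CS).
have -> : (\prod_(i in Sbar | i \notin C) P (X i @^-1` BC i))%E =
          (\prod_(i in Sbar | i \notin C) P (X i @^-1` B i))%E.
  by apply: eq_bigr => i /andP[_ /negbTE iC]; rewrite /BC iC.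
by rewrite mul1e -muleA [in RHS](muleC (\prod_(i in Sbar | i \notin C) _)%E).
Qed.

Lemma tnth_splice {R : Type} {n : nat} (C : {set 'I_n}) (a b : 'I_n -> R) i :
  tnth (splice C a b) i = if i \in C then a i else b i.
Proof. exact: tnth_mktuple. Qed.

Lemma eq_splice {R : Type} {n : nat} (C : {set 'I_n}) (a b b' : 'I_n -> R) :
  (forall i, i \notin C -> b i = b' i) -> splice C a b = splice C a b'.
Proof. by move=> bb'; apply: eq_mktuple => i; case: ifPn => // /bb'. Qed.

Lemma measurable_splice {R : realType} {d} {T : measurableType d} {n : nat}
    (C : {set 'I_n}) (a b : 'I_n -> T -> R) :
  (forall i, i \in C -> measurable_fun setT (a i)) ->
  (forall i, i \notin C -> measurable_fun setT (b i)) ->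
  measurable_fun setT (fun t => splice C (fun w => a w t) (fun w => b w t)).
Proof.
move=> ma mb; apply/measurable_fun_tnthP => i.
rewrite (_ : _ \o _ = if i \in C then a i else b i).
  by case: ifPn; [exact: ma|exact: mb].
by apply/funext => t /=; rewrite tnth_splice; case: ifP.
Qed.

Lemma measurable_cdfR_fibre {R : realType} {d1} {T1 : measurableType d1}
    {d'} {T' : measurableType d'} (Q : probability T' R)
    (h : T1 * T' -> R) (y : T1 -> R) :
  measurable_fun setT h -> measurable_fun setT y ->
  measurable_fun setT (fun x => cdfR Q (fun s => h (x, s)) (y x)).
Proof.
move=> mh my; pose A := [set xs : T1 * T' | h xs <= y xs.1].
have mA : measurable A.
  rewrite -[X in measurable X]setTI; apply: measurable_fun_le => //.
  exact: measurableT_comp.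
have xA x : [set s | h (x, s) <= y x] = xsection A x.
  by apply/seteqP; split => s; rewrite /xsection /= inE.
apply/measurable_realfun.measurable_EFinP; rewrite (_ : _ \o _ = Q \o xsection A).
  exact: measurable_fun_xsection.
apply/funext => x /=; rewrite /cdfR xA fineK // fin_num_measure //.
exact: measurable_xsection.
Qed.

Definition tuple_rv {T R : Type} {n : nat} (X : 'I_n -> T -> R) (t : T) :
    n.-tuple R :=
  [tuple X i t | i < n].

Lemma tnth_tuple_rv {T R : Type} {n : nat} (X : 'I_n -> T -> R) t i :
  tnth (tuple_rv X t) i = X i t.
Proof. exact: tnth_mktuple. Qed.

(** * The coupling argument *)

Section coupling.
Context {R : realType} {d} {T : measurableType d} (P : probability T R).
Context {d'} {T' : measurableType d'} (Q : probability T' R) (n : nat).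
Variables (p : 'I_n -> T -> R) (u : 'I_n -> T' -> R) (g : 'I_n -> R -> R).
Variables (C : {set 'I_n}) (f : n.-tuple R -> R).
Hypotheses (mp : forall i, measurable_fun setT (p i))
  (mu : forall i, measurable_fun setT (u i))
  (mg : forall i, i \in C -> measurable_fun setT (g i))
  (mf : measurable_fun setT f).

Definition coupled (ts : T * T') : n.-tuple R :=
  splice C (fun w => g w (u w ts.2)) (fun w => p w ts.1).

Lemma measurable_coupled : measurable_fun setT coupled.
Proof.
apply: measurable_splice => i => [iC|_].
  by apply: measurableT_comp (mg iC) _; exact: measurableT_comp (mu i) _.
exact: measurableT_comp (mp i) _.
Qed.

Lemma measurable_tuple_rv : measurable_fun setT (tuple_rv p).
Proof.
apply/measurable_fun_tnthP => i.
by rewrite (_ : _ \o _ = p i) //; apply/funext => t /=; rewrite tnth_tuple_rv.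
Qed.

Lemma ptildeE t :
  ptilde Q u C f p t = Fcdf Q u C f (f (tuple_rv p t)) (tnth (tuple_rv p t)).
Proof.
have -> : tnth (tuple_rv p t) = fun w => p w t.
  by apply/funext => w; rewrite tnth_tuple_rv.
congr (Fcdf _ _ _ _ (f _) _); apply: eq_from_tnth => i.
by rewrite tnth_splice tnth_tuple_rv if_same.
Qed.

Lemma Fcdf_coupled t s :
  Fcdf Q u C f (f (coupled (t, s))) (tnth (coupled (t, s))) =
  cdfR Q (fun s' => f (splice C (fun w => u w s') (fun w => p w t)))
    (f (coupled (t, s))).
Proof.
congr (cdfR _ _ _); apply/funext => s'; congr (f _); apply: eq_splice => i iC.
by rewrite /coupled tnth_splice (negbTE iC).
Qed.

Section law.
Hypothesis lawP : forall B, (forall i, lrays (B i)) ->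
  P (cylinder [set: 'I_n] p B) =
  (P (cylinder (~: C) p B) * \prod_(i in C) P (p i @^-1` B i))%E.
Hypothesis lawQ : forall B, (forall i, lrays (B i)) ->
  Q (cylinder C (fun i => g i \o u i) B) = (\prod_(i in C) P (p i @^-1` B i))%E.

Lemma law_coupled S : measurable S ->
  P (tuple_rv p @^-1` S) = (P \x Q)%E (coupled @^-1` S).
Proof.
apply: eq_law_lray_boxes.
- exact: measurable_tuple_rv.
- exact: measurable_coupled.
- exact: le_lt_trans (probability_le1 P measurableT) (ltry 1).
move=> B lB; have mB i : measurable (B i) by exact: lrays_measurable.
have -> : tuple_rv p @^-1` box B = cylinder [set: 'I_n] p B.
  apply/seteqP; split => t /= pB i; last by rewrite tnth_tuple_rv; exact: pB.
  by move=> _; move: (pB i); rewrite tnth_tuple_rv.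
have -> : coupled @^-1` box B =
          cylinder (~: C) p B `*` cylinder C (fun i => g i \o u i) B.
  apply/seteqP; split => -[t s] /=; rewrite /coupled.
    move=> pB; split => i; rewrite ?inE => iC; move: (pB i);
      by rewrite tnth_splice ?(negbTE iC) ?iC.
  case=> pB guB i; rewrite tnth_splice; case: ifPn => iC; first exact: guB.
  by apply: pB; rewrite inE.
rewrite /= product_measure1E ?lawP //.
- by congr (_ * _)%E; symmetry; exact: lawQ.
- by apply: measurable_cylinder => i _; [exact: mp|exact: mB].
- apply: measurable_cylinder => i iC; last exact: mB.
  exact: measurableT_comp (mg iC) (mu i).
Qed.

Lemma super_uniform_ptilde_of_coupling :
  (forall t s, f (splice C (fun w => u w s) (fun w => p w t)) <= f (coupled (t, s))) ->
  super_uniform P (ptilde Q u C f p).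
Proof.
move=> dom c c01.
pose G z := Fcdf Q u C f (f z) (tnth z).
have mG : measurable_fun setT G.
  pose h zs := f (splice C (fun w => u w zs.2) (tnth zs.1)).
  apply: (measurable_cdfR_fibre Q (h := h)) => //.
  apply: measurableT_comp mf _; apply: measurable_splice => i _.
    exact: measurableT_comp (mu i) measurable_snd.
  exact: measurableT_comp (measurable_tnth i) measurable_fst.
have mS : measurable (G @^-1` [set x | x <= c]).
  by rewrite -[X in measurable X]setTI; exact: mG (measurable_lray c).
rewrite (_ : [set t | _] = tuple_rv p @^-1` (G @^-1` [set x | x <= c])); last first.
  by apply/seteqP; split => t; rewrite /= ptildeE.
rewrite (law_coupled mS) /= /product_measure1 /=.
apply: (@le_trans _ _ (\int[P]_t c%:E)%E); last first.
  have PT : (P : {measure set T -> \bar R}) setT = 1%E by exact: probability_setT.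
  by rewrite integral_cst // PT mule1.
apply: ge0_le_integral => //.
  apply: measurable_fun_xsection; rewrite -[X in measurable X]setTI.
  exact: measurable_coupled measurableT _ mS.
move=> t _ /=; pose Z s := f (splice C (fun w => u w s) (fun w => p w t)).
pose W s := f (coupled (t, s)).
have mZ : measurable_fun setT Z.
  by apply: measurableT_comp mf _; apply: measurable_splice => i _;
    [exact: mu|exact: measurable_cst].
have mW : measurable_fun setT W.
  exact: measurable_fun_pair2 (measurableT_comp mf measurable_coupled).
have -> : xsection (coupled @^-1` (G @^-1` [set x | x <= c])) t =
          [set s | (cdfR Q Z \o W) s <= c].
  by apply/seteqP; split => s; rewrite /xsection /= inE /G /= Fcdf_coupled.
exact (cdfR_comp_super_uniform Q mZ mW (dom t) c01).
Qed.

End law.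

Lemma super_uniform_ptilde (Sbar : {set 'I_n}) :
  C \subset Sbar -> nulls_independent P p Sbar -> mutually_independent Q u ->
  (forall i, i \in C -> forall a,
     Q [set s | g i (u i s) <= a] = P [set t | p i t <= a]) ->
  (forall t s, f (splice C (fun w => u w s) (fun w => p w t)) <= f (coupled (t, s))) ->
  super_uniform P (ptilde Q u C f p).
Proof.
move=> CS indep_p indep_u law_g.
apply: super_uniform_ptilde_of_coupling => B lB;
  have mB i : measurable (B i) := lrays_measurable (lB i).
  exact: nulls_independent_cylinder CS indep_p mB.
pose gB i := if i \in C then g i @^-1` B i else setT.
have mgB i : measurable (gB i).
  rewrite /gB; case: ifPn => // iC.
  by rewrite -[X in measurable X]setTI; exact: mg.
have -> : cylinder C (fun i => g i \o u i) B = cylinder C u gB.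
  by apply/seteqP; split => s /= guB i iC; move: (guB i iC); rewrite /gB iC.
rewrite cylinderE indep_u //; apply: eq_bigr => i iC; rewrite /gB iC.
case: (lB i) => [->|[a ->]]; last exact: law_g.
by rewrite !preimage_setT !probability_setT.
Qed.

End coupling.

Lemma desc_set_sub {n : nat} (e : rel 'I_n) (S : {set 'I_n}) v :
  (forall v w, v \notin S -> connect e w v -> w \notin S) ->
  v \in S -> desc_set e v \subset S.
Proof.
move=> anc vS; apply/fintype.subsetP => w; rewrite inE => vw.
by apply: contraTT vS => /anc; apply.
Qed.

Theorem lemma1 (R : realType) (n : nat)
  (d : measure_display) (T : measurableType d) (P : probability T R)
  (p : 'I_n -> {RV P >-> R})
  (Sbar : {set 'I_n})
  (e : rel 'I_n)
  (f : 'I_n -> n.-tuple R -> R)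
  (d' : measure_display) (T' : measurableType d') (Q : probability T' R)
  (u : 'I_n -> {RV Q >-> R}) :
  acyclic e ->
  (forall v w, v \notin Sbar -> connect e w v -> w \notin Sbar) ->
  (forall v, measurable_fun [set: n.-tuple R] (f v)) ->
  mutually_independent Q (fun w => u w : T' -> R) ->
  (forall w, uniform01 Q (u w)) ->
  nulls_independent P (fun w => p w : T -> R) Sbar ->
  (* (a) *)
  ((forall v, v \in Sbar -> uniform01 P (p v)) ->
     forall v, v \in Sbar ->
       super_uniform P
         (ptilde Q (fun w => u w : T' -> R) (desc_set e v) (f v)
                 (fun w => p w : T -> R)))
  /\
  (* (b) *)
  ((forall v, v \in Sbar -> super_uniform P (p v)) ->
     forall v, v \in Sbar ->
       (forall x y : n.-tuple R,
          (forall w, w \notin desc_set e v -> tnth x w = tnth y w) ->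
          (forall w, w \in desc_set e v -> tnth x w <= tnth y w) ->
          f v x <= f v y) ->
       super_uniform P
         (ptilde Q (fun w => u w : T' -> R) (desc_set e v) (f v)
                 (fun w => p w : T -> R))).
Proof.
move=> _ anc mf indep_u unif_u indep_p.
have mp w : measurable_fun setT (p w : T -> R) by exact: measurable_funPT.
have mu w : measurable_fun setT (u w : T' -> R) by exact: measurable_funPT.
split => [unif_p|su_p] v vS; have CS := desc_set_sub anc vS.
- apply: (super_uniform_ptilde (g := fun=> id) _ _ _ _ CS indep_p indep_u) => //.
  move=> i iC a; transitivity (uniform_prob (@ltr01 R) [set x | x <= a]).
    exact: unif_u (measurable_lray a).
  by symmetry; apply: unif_p (measurable_lray a); exact: (fintype.subsetP CS).
- move=> mono.
  have su_C w : w \in desc_set e v -> super_uniform P (p w).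
    by move=> wC; apply: su_p; exact: (fintype.subsetP CS).
  apply: (super_uniform_ptilde (g := fun w => quantile P (p w))
           _ _ _ _ CS indep_p indep_u) => //.
  + by move=> i iC; exact: measurable_quantile (mp i) (su_C i iC).
  + by move=> i iC; exact (uniform01_quantile (mp i) (su_C i iC) (unif_u i)).
  + move=> t s; apply: mono => w; rewrite !tnth_splice; first by move/negbTE ->.
    by move=> wC; rewrite wC; exact (quantile_ge (mp w) (su_C w wC) _).
Qed.
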